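(* Let $\mathcal T$ be a good triangulation of $\mathcal C_G$ and $S\in\mathcal T$ a maximal simplex. Then every connected component of the graph $(V,D(S))$ (including components consisting of a single node) contains exactly one selected node, i.e. exactly one node of $V(S)$.
   Context: For a finite undirected multigraph $G=(V,E)$ (loops, parallel edges and isolated nodes allowed) with $n=|V|$, $m=|E|$, work in $\mathbb{R}^V\times\mathbb{R}^E\cong\mathbb{R}^{n+m}$ with standard basis vectors $e_u$ ($u\in V$), $e_f$ ($f\in E$). Fix for each edge $f$ an ordering $(u,v)$ of its endpoints ($u=v$ for a loop) and set $\widetilde e_f=e_u+e_v-e_f$, $\overleftarrow e_f=e_u-e_v+e_f$, $\overrightarrow e_f=-e_u+e_v+e_f$ (so for a loop $\overleftarrow e_f=\overrightarrow e_f=e_f$). The cosmological polytope $\mathcal C_G$ is the convex hull of $\{e_f,\widetilde e_f,\overleftarrow e_f,\overrightarrow e_f: f\in E\}\cup\{e_u: u\in V\}$; these are exactly its lattice points, and it is an $(n+m-1)$-dimensional polytope in the hyperplane $\sum_i x_i=1$. A good triangulation of $\mathcal C_G$ is a regular triangulation (induced by a height function on the lattice points of $\mathcal C_G$) whose vertex set is the set of all lattice points of $\mathcal C_G$ and which contains the standard simplex $\mathrm{conv}\{e_u,e_f: u\in V, f\in E\}$ as a maximal cell; simplices are identified with their vertex sets. For a simplex $S\in\mathcal T$: the selected nodes are $V(S)=\{u\in V: e_u\in S\}$; the squiggly edges $\widetilde E(S)=\{f:\widetilde e_f\in S\}$; the selected edges $\widehat E(S)=\{f: e_f\in S\}$;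 for non-loop edges $f$, $f\in\overleftarrow E(S)$ iff $\overleftarrow e_f\in S$ and $f\in\overrightarrow E(S)$ iff $\overrightarrow e_f\in S$ (loops are never in $\overleftarrow E(S)\cup\overrightarrow E(S)$); the double edges are $D(S)=(\overleftarrow E(S)\cup\overrightarrow E(S))\cap\widehat E(S)$. *)

From HB Require Import structures.
From mathcomp Require Import all_boot all_order all_algebra.
Set Implicit Arguments. Unset Strict Implicit. Unset Printing Implicit Defensive.
Import Order.TTheory GRing.Theory Num.Theory.
Local Open Scope ring_scope.

(* A finite multigraph: nodes V, edges E, and for each edge a fixed ordering
   (u,v) of its endpoints (u = v for a loop).  Ambient space R^V x R^E is
   modelled as {ffun (V + E) -> R^o} (a vectType over R). *)
Section Cosmo.
Variables (R : realFieldType) (V E : finType) (ends : E -> V * V).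

Definition coord := (V + E)%type.
Definition pt := {ffun coord -> R^o}.

Definition ebasis (i : coord) : pt := [ffun j => ((j == i)%:R : R^o)].
Definition e_node (u : V) : pt := ebasis (inl u).
Definition e_edge (f : E) : pt := ebasis (inr f).
Definition e_til (f : E) : pt :=
  e_node (ends f).1 + e_node (ends f).2 - e_edge f.
Definition e_left (f : E) : pt :=
  e_node (ends f).1 - e_node (ends f).2 + e_edge f.
Definition e_right (f : E) : pt :=
  - e_node (ends f).1 + e_node (ends f).2 + e_edge f.

Definition is_loop (f : E) : bool := (ends f).1 == (ends f).2.

Definition lattice_pts : seq pt :=
  undup ([seq e_node u | u : V] ++
         flatten [seq [:: e_edge f; e_til f; e_left f; e_right f] | f : E]).

Definition dotp (c p : pt) : R := \sum_(i : coord) (c i : R) * (p i : R).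

(* Regular subdivision induced by a height function w: a cell is the set of
   lattice points whose lifts lie on a lower face of the lifted configuration.
   As all points lie in the hyperplane sum x_i = 1, affine functionals on it
   are linear functionals c. *)
Definition lower_face (w : pt -> R) (c : pt) : Prop :=
  forall p, p \in lattice_pts -> dotp c p <= w p.

Definition cell_pts (w : pt -> R) (c : pt) : seq pt :=
  [seq p <- lattice_pts | dotp c p == w p].

Definition is_cell (w : pt -> R) (S : seq pt) : Prop :=
  exists2 c, lower_face w c & S =i cell_pts w c.

(* w induces a triangulation: every cell is a simplex (its points are
   affinely, equivalently linearly, independent). *)
Definition induces_triangulation (w : pt -> R) : Prop :=
  forall S, is_cell w S -> uniq S -> free S.

Definition uses_all_points (w : pt -> R) : Prop :=
  forall p, p \in lattice_pts -> exists2 S, is_cell w S & p \in S.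

Definition std_simplex : seq pt := [seq ebasis i | i : coord].

Definition maximal_cell (w : pt -> R) (S : seq pt) : Prop :=
  is_cell w S /\ forall S', is_cell w S' -> {subset S <= S'} -> {subset S' <= S}.

Definition good_height (w : pt -> R) : Prop :=
  [/\ induces_triangulation w, uses_all_points w & maximal_cell w std_simplex].

Definition sel_nodes (S : seq pt) : {set V} := [set u | e_node u \in S].
Definition sel_edges (S : seq pt) : {set E} := [set f | e_edge f \in S].
Definition left_edges (S : seq pt) : {set E} :=
  [set f | ~~ is_loop f & e_left f \in S].
Definition right_edges (S : seq pt) : {set E} :=
  [set f | ~~ is_loop f & e_right f \in S].
Definition double_edges (S : seq pt) : {set E} :=
  (left_edges S :|: right_edges S) :&: sel_edges S.

Definition D_adj (S : seq pt) : rel V := fun x y =>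
  [exists f, (f \in double_edges S) &&
     ((ends f == (x, y)) || (ends f == (y, x)))].

End Cosmo.

From Pilot Require Import Defs.
From HB Require Import structures.
From mathcomp Require Import all_boot all_order all_algebra.
From mathcomp Require Import lra.
Import Order.TTheory GRing.Theory Num.Theory.
Local Open Scope ring_scope.

(* Let c support the maximal cell S and c0 the standard simplex.  Since w agrees
   with c0 on the unit vectors and exceeds it on every lattice point with a -1
   coordinate, c <= c0 coordinatewise; hence a squiggly point never shares S
   with another point of its edge, and the two arrows of a non-loop never both
   lie in S.
   Uniqueness: along a double edge f, e_u - e_v is (arrow - e_f) up to sign, so
   two selected nodes in one component of (V, D(S)) would make S linearly
   dependent.
   Existence: if a component K contains no selected node, the indicator of K on
   the nodes extends to a nonzero functional d vanishing on S, and tilting c in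
   the direction of d produces a cell strictly containing S. *)

Section SpanFacts.
Set Implicit Arguments.
Unset Strict Implicit.
Variables (K : fieldType) (vT : vectType K).

Lemma connect_subv_diff (T : finType) (e : rel T) (g : T -> vT) (U : {vspace vT}) :
  (forall x y, e x y -> g x - g y \in U) ->
  forall x y, connect e x y -> g x - g y \in U.
Proof.
move=> eU x _ /connectP[p e_p ->]; elim: p x e_p => [|y p IHp] x /=.
  by rewrite subrr mem0v.
case/andP=> /eU Uxy /IHp Uy.
by rewrite -[g x](subrK (g y)) -addrA; apply: memvD.
Qed.

Lemma free_notin_span_rem (s : seq vT) x :
  free s -> x \in s -> x \notin <<rem x s>>%VS.
Proof. by move=> + xs; rewrite (perm_free (perm_to_rem xs)) free_cons => /andP[]. Qed.

End SpanFacts.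

Section CosmologicalPolytope.
Set Implicit Arguments.
Unset Strict Implicit.
Variables (R : realFieldType) (V E : finType) (ends : E -> V * V).

Local Notation pt := (pt R V E).
Local Notation ebasis := (@ebasis R V E).
Local Notation e_node := (@e_node R V E).
Local Notation e_edge := (@e_edge R V E).
Local Notation e_til := (@e_til R V E ends).
Local Notation e_left := (@e_left R V E ends).
Local Notation e_right := (@e_right R V E ends).
Local Notation is_loop := (@is_loop V E ends).
Local Notation lattice_pts := (@lattice_pts R V E ends).
Local Notation std_simplex := (std_simplex R V E).
Local Notation lower_face := (@lower_face R V E ends).
Local Notation cell_pts := (@cell_pts R V E ends).
Local Notation is_cell := (@is_cell R V E ends).
Local Notation maximal_cell := (@maximal_cell R V E ends).
Local Notation double_edges := (@double_edges R V E ends).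
Local Notation D_adj := (@D_adj R V E ends).
Local Notation induces_triangulation := (@induces_triangulation R V E ends).

Implicit Types (c d p q : pt) (f : E).

Lemma dotpDr c p q : dotp c (p + q) = dotp c p + dotp c q.
Proof. by rewrite /dotp -big_split; apply: eq_bigr => i _; rewrite ffunE mulrDr. Qed.

Lemma dotpNr c p : dotp c (- p) = - dotp c p.
Proof. by rewrite /dotp -sumrN; apply: eq_bigr => i _; rewrite ffunE mulrN. Qed.

Lemma dotpDl c d p : dotp (c + d) p = dotp c p + dotp d p.
Proof. by rewrite /dotp -big_split; apply: eq_bigr => i _; rewrite ffunE mulrDl. Qed.

Lemma dotpZl (t : R) d p : dotp (t *: d) p = t * dotp d p.
Proof. by rewrite /dotp mulr_sumr; apply: eq_bigr => i _; rewrite ffunE mulrA. Qed.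

Lemma dotpNl d p : dotp (- d) p = - dotp d p.
Proof. by rewrite -scaleN1r dotpZl mulN1r. Qed.

Lemma dotp_basis c i : dotp c (ebasis i) = c i.
Proof.
rewrite /dotp (bigD1 i) //= big1 ?addr0 => [|j /negbTE ji]; rewrite ffunE ?ji.
  by rewrite eqxx mulr1.
by rewrite mulr0.
Qed.

Lemma dotp_til c f :
  dotp c (e_til f) = c (inl (ends f).1) + c (inl (ends f).2) - c (inr f).
Proof. by rewrite dotpDr dotpNr dotpDr !dotp_basis. Qed.

Lemma dotp_left c f :
  dotp c (e_left f) = c (inl (ends f).1) - c (inl (ends f).2) + c (inr f).
Proof. by rewrite !dotpDr dotpNr !dotp_basis. Qed.

Lemma dotp_right c f :
  dotp c (e_right f) = - c (inl (ends f).1) + c (inl (ends f).2) + c (inr f).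
Proof. by rewrite !dotpDr dotpNr !dotp_basis. Qed.

Lemma dotp_node c u : dotp c (e_node u) = c (inl u).
Proof. exact: dotp_basis. Qed.

Lemma dotp_edge c f : dotp c (e_edge f) = c (inr f).
Proof. exact: dotp_basis. Qed.

Lemma ebasis_inj : injective ebasis.
Proof.
move=> i j /ffunP/(_ i); rewrite !ffunE eqxx.
by case: eqP => // _ /eqP; rewrite oner_eq0.
Qed.

Lemma e_til_edge_coord f : e_til f (inr f) = -1.
Proof. by rewrite !ffunE /= eqxx add0r sub0r. Qed.

Lemma e_left_head_coord f : ~~ is_loop f -> e_left f (inl (ends f).2) = -1.
Proof.
rewrite /Defs.is_loop => ne12; rewrite !ffunE /= eqxx.
by rewrite -[inl _ == _]/((ends f).2 == (ends f).1) eq_sym (negbTE ne12) addrC !add0r.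
Qed.

Lemma edge_points_edge_coord f :
  [/\ e_edge f (inr f) = 1, e_left f (inr f) = 1 & e_right f (inr f) = 1].
Proof. by rewrite !ffunE /= eqxx subrr oppr0 !add0r. Qed.

Lemma e_node_neq p u f : p (inr f) = 1 -> p != e_node u.
Proof. by move=> pf; apply: contra_eqN pf => /eqP ->; rewrite ffunE /= eq_sym oner_neq0. Qed.

Lemma mem_lattice_basis i : ebasis i \in lattice_pts.
Proof.
rewrite mem_undup mem_cat; case: i => [u|f]; first by apply/orP; left; apply/imageP; exists u.
apply/orP; right; apply/flatten_mapP; exists f; first exact: mem_enum.
by rewrite inE eqxx.
Qed.

Lemma lattice_pts_cases p : p \in lattice_pts ->
  (exists u, p = e_node u) \/
  exists f, p \in [:: e_edge f; e_til f; e_left f; e_right f].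
Proof.
rewrite mem_undup mem_cat => /orP[/imageP[u _ ->]|/flatten_mapP[f _ pf]].
  by left; exists u.
by right; exists f.
Qed.

Section MaximalCell.
Variables (w : pt -> R) (S : seq pt).
Hypothesis maxS : maximal_cell w S.

Lemma maximal_cell_orthogonal_le0 d p :
  (forall q, q \in S -> dotp d q = 0) -> p \in lattice_pts -> dotp d p <= 0.
Proof.
move=> dS0 pL; rewrite leNgt; apply/negP => dp_gt0.
have [[c lfc eqS] maxS'] := maxS.
(* The largest tilt c + t d that stays below w touches a new lattice point. *)
pose ratio q := (w q - dotp c q) / dotp d q.
pose P (j : seq_sub lattice_pts) := 0 < dotp d (val j).
have [q Pq q_min] := @arg_minP _ R _ (SeqSub pL) P (fun j => ratio (val j)) dp_gt0.
set t := ratio (val q) in q_min.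
have t_ge0 : 0 <= t by rewrite divr_ge0 ?subr_ge0 ?lfc ?(valP q) ?ltW.
pose c' := c + t *: d.
have dotp_c' r : dotp c' r = dotp c r + t * dotp d r by rewrite dotpDl dotpZl.
have lfc' : lower_face w c'.
  move=> r rL; rewrite dotp_c'; have [dr_le0|dr_gt0] := leP (dotp d r) 0.
    by have := lfc r rL; have := mulr_ge0_le0 t_ge0 dr_le0; lra.
  by have := q_min (SeqSub rL) dr_gt0; rewrite /= ler_pdivlMr //; lra.
have S_sub : {subset S <= cell_pts w c'}.
  move=> r rS; have := rS; rewrite eqS !mem_filter => /andP[/eqP <- ->].
  by rewrite dotp_c' dS0 // mulr0 addr0 eqxx.
have q_cell : val q \in cell_pts w c'.
  by rewrite mem_filter (valP q) andbT dotp_c' /t /ratio divfK ?lt0r_neq0 // addrC subrK.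
have qS := maxS' _ (ex_intro2 _ _ c' lfc' (frefl _)) S_sub _ q_cell.
by move: Pq; rewrite /P dS0 ?ltxx.
Qed.

Lemma maximal_cell_orthogonal d : (forall q, q \in S -> dotp d q = 0) -> d = 0.
Proof.
move=> dS0; have le0 d' i : (forall q, q \in S -> dotp d' q = 0) -> d' i <= 0.
  by move=> d'S0; rewrite -dotp_basis; apply: maximal_cell_orthogonal_le0 (mem_lattice_basis i).
apply/ffunP => i; rewrite ffunE; apply/le_anti; rewrite le0 //=.
have := le0 (- d) i; rewrite ffunE oppr_le0; apply=> q qS.
by rewrite dotpNl dS0 ?oppr0.
Qed.

End MaximalCell.

Lemma connect_D_adj_sym S : connect_sym (D_adj S).
Proof. by apply: sym_connect_sym => x y; apply: eq_existsb => f; rewrite orbC. Qed.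

Lemma D_adj_double_edge S f : f \in double_edges S -> D_adj S (ends f).1 (ends f).2.
Proof. by move=> fS; apply/existsP; exists f; rewrite fS -surjective_pairing eqxx. Qed.

Lemma double_edge_node_diff S (U : {vspace pt}) f :
  (forall p, p \in S -> p (inr f) = 1 -> p \in U) ->
  f \in double_edges S -> e_node (ends f).1 - e_node (ends f).2 \in U.
Proof.
have [eC lC rC] := edge_points_edge_coord f.
move=> SU; rewrite !inE => /andP[/orP[] /andP[_ lrS] eS].
  have <- : e_left f - e_edge f = e_node (ends f).1 - e_node (ends f).2.
    by rewrite /Defs.e_left addrK.
  by apply: memvB; apply: SU.
have <- : e_edge f - e_right f = e_node (ends f).1 - e_node (ends f).2.
  by rewrite /Defs.e_right !opprD opprK addrA [e_edge f + _]addrC addrK.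
by apply: memvB; apply: SU.
Qed.

Lemma connect_D_adj_node_diff S (U : {vspace pt}) x y :
  (forall f p, p \in S -> p (inr f) = 1 -> p \in U) ->
  connect (D_adj S) x y -> e_node x - e_node y \in U.
Proof.
move=> SU; apply: connect_subv_diff => a b /existsP[f /andP[fS]].
have fU := double_edge_node_diff (SU f) fS.
by case/orP=> /eqP ends_f; rewrite ends_f /= in fU; rewrite // -opprB memvN.
Qed.

Lemma cell_component_sel_uniq w S x y :
  induces_triangulation w -> is_cell w S ->
  connect (D_adj S) x y -> x \in sel_nodes S -> y \in sel_nodes S -> x = y.
Proof.
move=> tri [c lfc eqS] cxy; rewrite !inE eqS => xC yC.
apply/eqP; apply: contraT => nxy.
set C := cell_pts w c.
have uC : uniq C by rewrite filter_uniq ?undup_uniq.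
have CU p : p \in C -> p != e_node x -> p \in <<rem (e_node x) C>>%VS.
  by move=> pC px; rewrite memv_span // mem_rem_uniq // inE px.
have /negP[] := free_notin_span_rem (tri C (ex_intro2 _ _ c lfc (frefl _)) uC) xC.
rewrite -[X in X \in _](subrK (e_node y)); apply: memvD.
  apply: connect_D_adj_node_diff cxy => f p; rewrite eqS => pC pf.
  by apply: CU => //; apply: e_node_neq pf.
apply: CU; first by rewrite -eqS.
by apply: contra nxy => /eqP/ebasis_inj[->].
Qed.

(* The edge coordinate is the value making the functional vanish on whichever
   of the squiggly point and the two arrows lies in S; by the cell lemmas below
   these constraints never conflict. *)
Definition potential_lift (S : seq pt) (phi : V -> R) : pt :=
  [ffun i => match i with
    | inl x => phi x
    | inr f =>
      let a := phi (ends f).1 in let b := phi (ends f).2 in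
      if e_til f \in S then a + b
      else if e_left f \in S then b - a
      else if e_right f \in S then a - b else 0
    end].

Section GoodTriangulation.
Variables (w : pt -> R) (c0 : pt).
Hypotheses (lf0 : lower_face w c0) (std0 : std_simplex =i cell_pts w c0).

Lemma height_basis i : w (ebasis i) = c0 i.
Proof.
have : ebasis i \in std_simplex by apply/imageP; exists i.
by rewrite std0 mem_filter => /andP[/eqP <- _]; rewrite dotp_basis.
Qed.

Lemma lower_face_le_std c i : lower_face w c -> c i <= c0 i.
Proof. by move=> lfc; rewrite -height_basis -dotp_basis; apply: lfc (mem_lattice_basis i). Qed.

Lemma std_lt_height p j : p \in lattice_pts -> p j = -1 -> dotp c0 p < w p.
Proof.
move=> pL pj; rewrite lt_def lf0 // andbT eq_sym.
have : p \notin std_simplex.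
  by apply/imageP => -[i _ pi]; move: pj; rewrite pi ffunE; case: (j == i) => /=; lra.
by rewrite std0 mem_filter pL andbT.
Qed.

Section Cell.
Variables (c : pt) (S : seq pt).
Hypotheses (lfc : lower_face w c) (eqS : S =i cell_pts w c).

Lemma std_le_cell p : p \in S -> dotp c0 p <= dotp c p.
Proof. by rewrite eqS mem_filter => /andP[/eqP -> /lf0]. Qed.

Lemma std_lt_cell p j : p \in S -> p j = -1 -> dotp c0 p < dotp c p.
Proof. by rewrite eqS mem_filter => /andP[/eqP -> /std_lt_height]; apply. Qed.

Lemma cell_til_isolated f :
  e_til f \in S -> [/\ e_edge f \notin S, e_left f \notin S & e_right f \notin S].
Proof.
move=> tS; have := std_lt_cell tS (e_til_edge_coord f); rewrite !dotp_til => til_lt.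
have le_a := lower_face_le_std (inl (ends f).1) lfc.
have le_b := lower_face_le_std (inl (ends f).2) lfc.
have le_f := lower_face_le_std (inr f) lfc.
split; apply/negP => /std_le_cell;
  rewrite ?dotp_edge ?dotp_left ?dotp_right; lra.
Qed.

Lemma cell_left_right f : e_left f \in S -> e_right f \in S -> is_loop f.
Proof.
move=> lS rS; apply: contraT => nl.
have := std_lt_cell lS (e_left_head_coord nl); have := std_le_cell rS.
by rewrite !dotp_left !dotp_right; have := lower_face_le_std (inr f) lfc; lra.
Qed.

Lemma potential_lift_orthogonal phi :
  (forall u, u \in sel_nodes S -> phi u = 0) ->
  {in double_edges S, forall f, phi (ends f).1 = phi (ends f).2} ->
  forall p, p \in S -> dotp (potential_lift S phi) p = 0.
Proof.
move=> phi_sel phi_dbl p pS.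
have pL : p \in lattice_pts by move: pS; rewrite eqS mem_filter => /andP[].
move: pS; case: (lattice_pts_cases pL) => [[u ->] uS|[f]].
  by rewrite dotp_node ffunE phi_sel // inE.
have phi_ends : e_edge f \in S -> (e_left f \in S) || (e_right f \in S) ->
    phi (ends f).1 = phi (ends f).2.
  move=> eS lrS; have [/eqP -> //|nl] := boolP (is_loop f).
  by apply: phi_dbl; rewrite !inE nl eS andbT.
have til_out q : q \in S -> q \in [:: e_edge f; e_left f; e_right f] -> e_til f \in S = false.
  move=> qS qf; apply/negbTE; apply: contraL qS => /cell_til_isolated[].
  by move: qf; rewrite !inE => /or3P[] /eqP ->.
rewrite !inE => /or4P[] /eqP -> pS; rewrite ?dotp_edge ?dotp_til ?dotp_left ?dotp_right !ffunE /=.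
- rewrite (til_out _ pS) ?mem_head //; case: ifP => [lS|_].
    by rewrite (phi_ends pS) ?lS // subrr.
  by case: ifP => // rS; rewrite (phi_ends pS) ?rS ?orbT // subrr.
- by rewrite pS; lra.
- by rewrite (til_out _ pS) ?pS ?inE ?eqxx ?orbT //; lra.
rewrite (til_out _ pS) ?inE ?eqxx ?orbT //; case: ifP => [lS|_]; last by rewrite pS; lra.
by rewrite (eqP (cell_left_right lS pS)); lra.
Qed.

End Cell.

Lemma maximal_cell_potential_eq0 S (phi : V -> R) :
  maximal_cell w S ->
  (forall u, u \in sel_nodes S -> phi u = 0) ->
  {in double_edges S, forall f, phi (ends f).1 = phi (ends f).2} ->
  forall x, phi x = 0.
Proof.
move=> maxS phi_sel phi_dbl x; have [[c lfc eqS] _] := maxS.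
have /ffunP/(_ (inl x)) :=
  maximal_cell_orthogonal maxS (potential_lift_orthogonal lfc eqS phi_sel phi_dbl).
by rewrite !ffunE.
Qed.

Lemma maximal_cell_component_sel S u :
  maximal_cell w S -> exists2 v, connect (D_adj S) u v & v \in sel_nodes S.
Proof.
move=> maxS.
case: (pickP [pred v | connect (D_adj S) u v && (v \in sel_nodes S)]).
  by move=> v /andP[]; exists v.
move=> no_sel; pose phi x : R := (connect (D_adj S) u x)%:R.
have : phi u = 0.
  apply: (maximal_cell_potential_eq0 maxS) => [x xS | f fS].
    by rewrite /phi; have := no_sel x; rewrite /= xS andbT => ->.
  by rewrite /phi (same_connect1r (connect_D_adj_sym S) (D_adj_double_edge fS)).
by rewrite /phi connect0 => /eqP; rewrite oner_eq0.
Qed.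

End GoodTriangulation.

End CosmologicalPolytope.

Theorem mainTheorem3 (R : realFieldType) (V E : finType) (ends : E -> V * V)
    (w : pt R V E -> R) (S : seq (pt R V E)) :
  good_height ends w ->
  maximal_cell ends w S ->
  forall u : V,
    #|[set x | connect (D_adj ends S) u x & x \in sel_nodes S]| = 1%N.
Proof.
move=> [tri _ [[c0 lf0 std0] _]] maxS u.
have [v uv vS] := maximal_cell_component_sel lf0 std0 u maxS.
apply/eqP/cards1P; exists v; apply/setP => x; rewrite in_set in_set1.
apply/andP/eqP => [[ux xS]|->] //.
apply: (cell_component_sel_uniq tri maxS.1 _ xS vS).
by rewrite -(same_connect (connect_D_adj_sym ends S) ux).
Qed.
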